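(* Let $N=\{1,\ldots,n\}$. $\mathscr{BG}_+(n)$, viewed as a subset of $\mathbb{R}^{2^N\setminus\{\varnothing,N\}}$, is a $(2^n-2)$-dimensional polytope.
   Context: A game on $N$ is a map $v:2^N\to\mathbb{R}$ with $v(\varnothing)=0$. $\mathscr{G}_+(n)$ is the set of games with $v(S)\geqslant 0$ for all $S$ and $v(N)=1$. A collection $\mathscr{B}$ of nonempty subsets of $N$ is balanced if there exist positive weights $(\lambda_S)_{S\in\mathscr{B}}$ with $\sum_{S\in\mathscr{B},S\ni i}\lambda_S=1$ for all $i\in N$; minimal balanced if no proper subcollection is balanced, with unique weights $\lambda^{\mathscr{B}}_S$. $\mathfrak{B}^*(n)$ is the set of minimal balanced collections on $N$ other than $\{N\}$. $\mathscr{BG}_+(n)=\{v\in\mathscr{G}_+(n):\sum_{S\in\mathscr{B}}\lambda^{\mathscr{B}}_Sv(S)\leqslant 1\ \forall\mathscr{B}\in\mathfrak{B}^*(n)\}$, i.e. the nonnegative games with $v(N)=1$ having nonempty core. *)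

From HB Require Import structures.
From mathcomp Require Import all_boot all_order all_algebra.
Set Implicit Arguments. Unset Strict Implicit. Unset Printing Implicit Defensive.
Import Order.TTheory GRing.Theory Num.Theory.
Local Open Scope ring_scope.

Section Games.
Variable R : realFieldType.
Variable n : nat.

Definition coords : predArgType :=
  {S : {set 'I_n} | (S != set0) && (S != setT)}.

(* The game v with v(emptyset) = 0, v(N) = 1 and v(S) = x S otherwise. *)
Definition game_of (x : coords -> R) (S : {set 'I_n}) : R :=
  match insub S : option coords with
  | Some s => x s
  | None => if S == set0 then 0 else 1
  end.

Definition balancing_weights (B : {set {set 'I_n}}) (lam : {set 'I_n} -> R) :=
  (forall S, S \in B -> 0 < lam S) /\
  (forall i : 'I_n, \sum_(S in B | i \in S) lam S = 1).

Definition balanced (B : {set {set 'I_n}}) :=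
  set0 \notin B /\ exists lam, balancing_weights B lam.

Definition minimal_balanced (B : {set {set 'I_n}}) :=
  balanced B /\ forall B' : {set {set 'I_n}}, B' \proper B -> ~ balanced B'.

(* For a minimal balanced
   collection the balancing weights are unique, so "the weights lambda^B"
   is rendered by quantifying over all balancing weights of B. *)
Definition BGplus (x : coords -> R) : Prop :=
  (forall s, 0 <= x s) /\
  (forall B : {set {set 'I_n}}, minimal_balanced B -> B != [set setT] ->
     forall lam, balancing_weights B lam ->
       \sum_(S in B) lam S * game_of x S <= 1).
End Games.

Section Polytopes.
Variable R : realFieldType.
Variable T : finType.

Definition is_polytope (P : (T -> R) -> Prop) : Prop :=
  (exists (m : nat) (A : 'I_m -> T -> R) (b : 'I_m -> R),
     forall x, P x <-> forall k, \sum_(t : T) A k t * x t <= b k) /\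
  (exists M : R, forall x, P x -> forall t, `|x t| <= M).

Definition aff_indep (k : nat) (p : 'I_k.+1 -> T -> R) : bool :=
  \rank (\matrix_(i < k, j < #|T|)
           (p (lift ord0 i) (enum_val j) - p ord0 (enum_val j))) == k.

Definition affine_dim (P : (T -> R) -> Prop) (d : nat) : Prop :=
  (exists p : 'I_d.+1 -> T -> R, (forall i, P (p i)) /\ aff_indep p) /\
  (forall p : 'I_d.+2 -> T -> R, (forall i, P (p i)) -> ~~ aff_indep p).
End Polytopes.

(* The inequalities defining BG+(n) are x >= 0 together with one linear
   inequality per minimal balanced collection B <> {N}; there are finitely
   many of them because the balancing weights of a minimal balanced collection
   are unique.  The pair {S, N \ S} is minimal balanced with weights 1, so
   x_S + x_(N \ S) <= 1 and BG+(n) lies in the unit cube.  Since balancing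
   weights never exceed 1, BG+(n) contains the origin and every unit vector,
   hence is full-dimensional. *)
From Stdlib Require Import ClassicalEpsilon.
From HB Require Import structures.
From mathcomp Require Import all_boot all_order all_algebra.
Set Implicit Arguments. Unset Strict Implicit. Unset Printing Implicit Defensive.
Import Order.TTheory GRing.Theory Num.Theory.
Local Open Scope ring_scope.

Section Polyhedra.
Variables (R : realFieldType) (T : finType).

Lemma finite_halfspaces_polyhedral (I : finType) (Q : I -> Prop)
    (A : I -> T -> R) (b : I -> R) (P : (T -> R) -> Prop) :
  (forall x, P x <-> forall i, Q i -> \sum_t A i t * x t <= b i) ->
  exists (m : nat) (A' : 'I_m -> T -> R) (b' : 'I_m -> R),
    forall x, P x <-> forall k, \sum_t A' k t * x t <= b' k.
Proof.
move=> defP.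
pose A' i := if excluded_middle_informative (Q i) then A i else fun=> 0.
pose b' i := if excluded_middle_informative (Q i) then b i else 0.
exists #|I|, (fun k => A' (enum_val k)), (fun k => b' (enum_val k)) => x.
have ineqP i : \sum_t A' i t * x t <= b' i <-> (Q i -> \sum_t A i t * x t <= b i).
  rewrite /A' /b'; case: excluded_middle_informative => [Qi | nQi].
    by split=> [|/(_ Qi)].
  by rewrite big1 ?lexx // => t _; rewrite mul0r.
rewrite defP; split=> [Px k | Px i]; first exact/ineqP/Px.
by rewrite -(enum_rankK i); apply/ineqP/Px.
Qed.

Lemma affine_dim_card (P : (T -> R) -> Prop) :
  P (fun=> 0) -> (forall t0, P (fun t => (t == t0)%:R)) -> affine_dim P #|T|.
Proof.
move=> P0 Pdelta; split.
  pose p (i : 'I_#|T|.+1) : T -> R :=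
    if unlift ord0 i is Some j then fun t => (t == enum_val j)%:R else fun=> 0.
  exists p; split; first by move=> i; rewrite /p; case: unlift.
  rewrite /aff_indep; set M := (\matrix_(_ < _, _ < _) _).
  have -> : M = 1%:M.
    apply/matrixP => i j; rewrite !mxE /p liftK unlift_none subr0.
    by rewrite (inj_eq enum_val_inj) eq_sym.
  by rewrite mxrank1.
by move=> p _; rewrite /aff_indep neq_ltn ltnS rank_leq_col.
Qed.

End Polyhedra.

Section BalancedCollections.
Variables (R : realFieldType) (n : nat).
Implicit Types (B : {set {set 'I_n}}) (S U : {set 'I_n}) (lam : {set 'I_n} -> R).

Lemma balancing_weights_le1 B lam S :
  balancing_weights B lam -> S \in B -> S != set0 -> lam S <= 1.
Proof.
move=> [lam_gt0 lam_sum] SB /set0Pn [i iS].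
rewrite -(lam_sum i) (bigD1 S) /= ?SB ?iS // lerDl sumr_ge0 //.
by move=> U /andP[/andP[UB _] _]; exact/ltW/lam_gt0.
Qed.

Lemma balanced_cover B i : balanced R B -> exists2 U, U \in B & i \in U.
Proof.
move=> [_ [lam [_ /(_ i) lam_sum]]].
have [/exists_inP // | /exists_inPn noU] := boolP [exists U in B, i \in U].
have no_term : (fun U => (U \in B) && (i \in U)) =1 xpred0.
  by move=> U; have [/noU/negbTE|] := boolP (U \in B).
by move/eqP: lam_sum; rewrite big_pred0 // eq_sym oner_eq0.
Qed.

Lemma balancing_weights_eq_of_le B lam lam' : set0 \notin B ->
  balancing_weights B lam -> balancing_weights B lam' ->
  {in B, forall S, lam S <= lam' S} -> {in B, lam =1 lam'}.
Proof.
move=> B0 [_ lam_sum] [_ lam'_sum] le_lam S SB.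
have /set0Pn [i iS] : S != set0 by apply: contraNneq B0 => <-.
have sum_diff : \sum_(U in B | i \in U) (lam' U - lam U) = 0.
  by rewrite sumrB lam_sum lam'_sum subrr.
apply/esym/eqP; rewrite -subr_eq0; apply/eqP.
apply: (psumr_eq0P _ sum_diff); last by rewrite SB iS.
by move=> U /andP[UB _]; rewrite subr_ge0 le_lam.
Qed.

(* Witnessed by the weights [(lam' - c * lam) / (1 - c)]. *)
Lemma balanced_strict_excess B lam lam' c : set0 \notin B ->
  balancing_weights B lam -> balancing_weights B lam' -> c < 1 ->
  {in B, forall S, c * lam S <= lam' S} ->
  balanced R [set S in B | c * lam S < lam' S].
Proof.
move=> B0 [_ lam_sum] [_ lam'_sum] c_lt1 c_le.
set B' := [set S in B | _].
have c1_gt0 : 0 < 1 - c by rewrite subr_gt0.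
split; first by apply: contra B0; rewrite inE => /andP[].
exists (fun S => (lam' S - c * lam S) / (1 - c)); split.
  by move=> S; rewrite inE => /andP[_ ?]; rewrite divr_gt0 // subr_gt0.
move=> i; have -> : \sum_(S in B' | i \in S) (lam' S - c * lam S) / (1 - c)
                  = \sum_(S in B | i \in S) (lam' S - c * lam S) / (1 - c).
  rewrite [RHS](bigID (mem B')) /= [X in _ = _ + X]big1 ?addr0.
    apply: eq_bigl => S; rewrite !inE.
    by case: (S \in B) (i \in S) (c * lam S < lam' S) => [] [] [].
  move=> S /andP[/andP[SB _]]; rewrite inE SB /= -leNgt => le_lam'.
  have -> : lam' S = c * lam S by apply/eqP; rewrite eq_le le_lam' c_le.
  by rewrite subrr mul0r.
by rewrite -mulr_suml sumrB -mulr_sumr lam_sum lam'_sum mulr1 divff ?gt_eqF.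
Qed.

Lemma minimal_balanced_weights_unique B lam lam' : minimal_balanced R B ->
  balancing_weights B lam -> balancing_weights B lam' -> {in B, lam =1 lam'}.
Proof.
(* With [c] the least ratio [lam' / lam] on [B], [c < 1] would yield a proper
   balanced subcollection. *)
move=> [[B0 _] minB] hlam hlam' S SB.
have [lam_gt0 _] := hlam.
have [Sm SmB Sm_min] := arg_minP (fun U => lam' U / lam U) SB.
set c := lam' Sm / lam Sm in Sm_min.
have c_le : {in B, forall U, c * lam U <= lam' U}.
  by move=> U UB; rewrite -ler_pdivlMr ?lam_gt0 ?Sm_min.
have [c_lt1 | c_ge1] := ltP c 1.
  exfalso; apply: minB (balanced_strict_excess B0 hlam hlam' c_lt1 c_le).
  apply/properP; split; first by apply/subsetP => U; rewrite inE => /andP[].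
  exists Sm => //; rewrite inE (SmB : Sm \in B) /= /c.
  by rewrite mulrAC -mulrA divff ?mulr1 ?ltxx // gt_eqF ?lam_gt0.
apply: balancing_weights_eq_of_le B0 hlam hlam' _ S SB => U UB.
by apply: le_trans (c_le U UB); rewrite ler_peMl // ltW ?lam_gt0.
Qed.

Lemma balanced_setT : (0 < n)%N -> balanced R [set [set: 'I_n]].
Proof.
move=> n_gt0; split.
  by rewrite inE eq_sym; apply/set0Pn; exists (Ordinal n_gt0).
exists (fun=> 1); split=> [|i]; first by move=> *; exact: ltr01.
rewrite (big_pred1 [set: 'I_n]) // => S.
by rewrite !inE andb_idr // => /eqP->; rewrite inE.
Qed.

Lemma setT_notin_minimal_balanced B : (0 < n)%N ->
  minimal_balanced R B -> B != [set setT] -> setT \notin B.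
Proof.
move=> n_gt0 [_ minB] BnT; apply/negP => TB.
apply: (minB [set setT]) (balanced_setT n_gt0).
by rewrite properEneq sub1set TB andbT eq_sym.
Qed.

Lemma big_setC_pair (F : {set 'I_n} -> R) S : S != set0 ->
  \sum_(U in [set S; ~: S]) F U = F S + F (~: S).
Proof.
case/set0Pn=> i iS; rewrite big_setU1 ?big_set1 // inE.
by apply/eqP => SC; move: (iS); rewrite {1}SC inE iS.
Qed.

Lemma balancing_weights_setC_pair S :
  S != set0 -> balancing_weights [set S; ~: S] (fun=> 1 : R).
Proof.
move=> S0; split=> [|i]; first by move=> *; exact: ltr01.
rewrite big_mkcondr big_setC_pair // inE.
by case: (i \in S); rewrite ?addr0 ?add0r.
Qed.

Lemma minimal_balanced_setC_pair S :
  S != set0 -> S != setT -> minimal_balanced R [set S; ~: S].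
Proof.
move=> S0 ST; have C0 : ~: S != set0.
  by apply: contraNneq ST => C0; rewrite -[S]setCK C0 setC0.
split.
  split; last by exists (fun=> 1); exact: balancing_weights_setC_pair.
  by rewrite !inE negb_or !(eq_sym set0) S0.
move=> B' /properP [B'sub [U US UB']] balB'.
have /set0Pn [i iU] : U != set0 by case/set2P: US => ->.
have [V VB' iV] := balanced_cover i balB'.
have VS := subsetP B'sub V VB'.
case/set2P: US iU UB' => -> iU UB'; case/set2P: VS iV VB' => -> iV VB'.
- by rewrite VB' in UB'.
- by rewrite inE iU in iV.
- by rewrite inE iV in iU.
- by rewrite VB' in UB'.
Qed.

End BalancedCollections.

Section CoreOfNonnegativeGames.
Variables (R : realFieldType) (n : nat).
Hypothesis n_gt0 : (0 < n)%N.
Implicit Types (x : coords n -> R) (B : {set {set 'I_n}}) (lam : {set 'I_n} -> R).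

Lemma card_coords : #|coords n| = (2 ^ n - 2)%N.
Proof.
have setT0 : [set: 'I_n] != set0 by apply/set0Pn; exists (Ordinal n_gt0).
have card_sets : #|{: {set 'I_n}}| = (2 ^ n)%N.
  by rewrite -cardsT -powersetT card_powerset cardsT card_ord.
rewrite card_sig -card_sets [in RHS](cardD1 set0) [in RHS](cardD1 setT) !inE.
rewrite setT0 subn2 /= add0n.
by apply: eq_card => S; rewrite !inE andbT andbC.
Qed.

Lemma game_of_val x t : game_of x (val t) = x t.
Proof. by rewrite /game_of valK. Qed.

Lemma game_of_ge0 x S : (forall t, 0 <= x t) -> 0 <= game_of x S.
Proof.
move=> x_ge0; rewrite /game_of; case: insub => [t|]; first exact: x_ge0.
by case: ifP => _; rewrite ?ler01.
Qed.

Lemma sum_game_of x B lam : setT \notin B ->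
  \sum_(S in B) lam S * game_of x S
    = \sum_t (if val t \in B then lam (val t) else 0) * x t.
Proof.
move=> TnB; rewrite big_mkcond (bigID [pred S | (S != set0) && (S != setT)]) /=.
rewrite [X in _ + X]big1 ?addr0 => [|S]; last first.
  rewrite negb_and !negbK => /orP[] /eqP->; last by rewrite (negbTE TnB).
  by rewrite /game_of insubF ?eqxx ?mulr0 ?if_same.
rewrite (big_sub [pred S | (S != set0) && (S != setT)]).
by apply: eq_bigr => t _; rewrite game_of_val; case: ifP; rewrite ?mul0r.
Qed.

Lemma BGplus_bounded x : BGplus x -> forall t, `|x t| <= 1.
Proof.
move=> [x_ge0 balanced_le1] t; have /andP[S0 ST] := valP t.
have pairnT : [set val t; ~: val t] != [set setT].
  by apply: contraNneq ST => /setP/(_ (val t)); rewrite !inE eqxx.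
have := balanced_le1 _ (minimal_balanced_setC_pair R S0 ST) pairnT _
  (balancing_weights_setC_pair R S0).
rewrite big_setC_pair // !mul1r game_of_val ger0_norm // => /(le_trans _); apply.
by rewrite lerDl game_of_ge0.
Qed.

Lemma BGplus_of_simplex x :
  (forall t, 0 <= x t) -> \sum_t x t <= 1 -> BGplus x.
Proof.
move=> x_ge0 sum_le1; split=> // B minB BnT lam lamB.
rewrite sum_game_of ?(setT_notin_minimal_balanced n_gt0 minB BnT) //.
apply: le_trans sum_le1; apply: ler_sum => t _.
case: ifP => tB; last by rewrite mul0r.
rewrite ler_piMl ?(balancing_weights_le1 lamB tB) //.
by case/andP: (valP t).
Qed.

(* The weights [lambda^B] of the paper; junk when [B] is not balanced. *)
Definition lambda_of B : {set 'I_n} -> R :=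
  epsilon (inhabits (fun=> 0)) (balancing_weights B).

Lemma lambda_ofP B lam :
  balancing_weights B lam -> balancing_weights B (lambda_of B).
Proof. by move=> lamB; apply: epsilon_spec; exists lam. Qed.

(* Inequality [inl s] is [x_s >= 0]; inequality [inr B] is the one of [B],
   imposed only when [B] is minimal balanced and [B <> {N}]. *)
Definition BG_ineq_active (i : coords n + {set {set 'I_n}}) : Prop :=
  if i is inr B then minimal_balanced R B /\ B != [set setT] else True.

Definition BG_ineq_coef (i : coords n + {set {set 'I_n}}) (t : coords n) : R :=
  match i with
  | inl s => - (t == s)%:R
  | inr B => if val t \in B then lambda_of B (val t) else 0
  end.

Definition BG_ineq_bound (i : coords n + {set {set 'I_n}}) : R :=
  if i is inr _ then 1 else 0.

Lemma BGplus_ineqP x : BGplus x <->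
  forall i, BG_ineq_active i -> \sum_t BG_ineq_coef i t * x t <= BG_ineq_bound i.
Proof.
have sum_inl s : \sum_t BG_ineq_coef (inl s) t * x t = - x s.
  rewrite (bigD1 s) //= eqxx mulN1r big1 ?addr0 // => t /negbTE->.
  by rewrite oppr0 mul0r.
have sum_inr B : minimal_balanced R B -> B != [set setT] ->
  \sum_(S in B) lambda_of B S * game_of x S
    = \sum_t BG_ineq_coef (inr B) t * x t.
  by move=> minB BnT; rewrite sum_game_of // (setT_notin_minimal_balanced n_gt0 minB).
split=> [[x_ge0 balanced_le1] [s _ | B [minB BnT]] | ineqs].
- by rewrite sum_inl oppr_le0.
- have [_ [lam lamB]] := minB.1.
  by rewrite /= -sum_inr //; apply: balanced_le1 => //; apply: lambda_ofP lamB.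
split=> [t | B minB BnT lam lamB].
  by have := ineqs (inl t) I; rewrite sum_inl oppr_le0.
rewrite (eq_bigr (fun S => lambda_of B S * game_of x S)); last first.
  move=> S SB.
  by rewrite (minimal_balanced_weights_unique minB lamB (lambda_ofP lamB)).
by rewrite sum_inr //; apply: ineqs.
Qed.

End CoreOfNonnegativeGames.

Theorem proposition1 (R : realFieldType) (n : nat) (hn : (0 < n)%N) :
  is_polytope (@BGplus R n) /\ affine_dim (@BGplus R n) (2 ^ n - 2)%N.
Proof.
split; first split.
- exact: finite_halfspaces_polyhedral (BGplus_ineqP hn).
- by exists 1; apply: BGplus_bounded.
rewrite -(card_coords hn); apply: affine_dim_card.
  by apply: (BGplus_of_simplex hn) => //; rewrite big1.
move=> t0; apply: (BGplus_of_simplex hn) => [t|]; first exact: ler0n.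
by rewrite (bigD1 t0) //= eqxx big1 ?addr0 // => t /negbTE->.
Qed.
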